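(* Let $A \in \mathbb{R}^{m\times n}$ satisfy the strong null space property (sNSP) of order $s$ (defined in the context). Let $\mathbf{b} \in \mathbb{R}^m$ with $\mathbf{b} \neq \mathbf{0}$, and let $\mathbf{x} \in \mathbb{R}^n$ be an $s$-sparse vector (i.e. $\|\mathbf{x}\|_0 \le s$) with $A\mathbf{x} = \mathbf{b}$. Then $\mathbf{x}$ is a local minimizer of $\|\cdot\|_1/\|\cdot\|_2$ on the affine set $\{\mathbf{z} : A\mathbf{z} = \mathbf{b}\}$: there exists $t^* > 0$ such that for every $\mathbf{v} \in \ker(A)$ with $0 < \|\mathbf{v}\|_2 \le t^*$, $$\frac{\|\mathbf{x}\|_1}{\|\mathbf{x}\|_2} \le \frac{\|\mathbf{x}+\mathbf{v}\|_1}{\|\mathbf{x}+\mathbf{v}\|_2}.$$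
   Context: Notation: $[n] = \{1,\dots,n\}$. For $S \subset [n]$, $\bar S = [n]\setminus S$. For $\mathbf{x} \in \mathbb{R}^n$, $\mathbf{x}_S \in \mathbb{R}^n$ has entries $(\mathbf{x}_S)_i = x_i$ if $i \in S$ and $0$ otherwise. $\|\mathbf{x}\|_0$ is the number of nonzero entries of $\mathbf{x}$. $\ker(A) = \{\mathbf{x} : A\mathbf{x} = \mathbf{0}\}$. Definition (sNSP): $A \in \mathbb{R}^{m\times n}$ satisfies the strong null space property of order $s$ if $(s+1)\|\mathbf{v}_S\|_1 \le \|\mathbf{v}_{\bar S}\|_1$ for all $\mathbf{v} \in \ker(A)\setminus\{\mathbf{0}\}$ and all $S \subset [n]$ with $|S| \le s$. *)

(* Real numbers are modelled by an arbitrary real closed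
   field R (rcfType), which provides the square root needed for the l2 norm. *)
From HB Require Import structures.
From mathcomp Require Import all_boot all_order all_algebra.
Set Implicit Arguments. Unset Strict Implicit. Unset Printing Implicit Defensive.
Import Order.TTheory GRing.Theory Num.Theory.
Local Open Scope ring_scope.

Section Defs.
Variables (R : rcfType).

Definition norm1 n (x : 'cV[R]_n) : R := \sum_(i < n) `|x i 0|.

Definition norm2 n (x : 'cV[R]_n) : R := Num.sqrt (\sum_(i < n) x i 0 ^+ 2).

Definition restr n (S : {set 'I_n}) (x : 'cV[R]_n) : 'cV[R]_n :=
  \col_i (if i \in S then x i 0 else 0).

Definition norm0 n (x : 'cV[R]_n) : nat := #|[set i : 'I_n | x i 0 != 0]|.

Definition sNSP m n (A : 'M[R]_(m, n)) (s : nat) : Prop :=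
  forall v : 'cV[R]_n, A *m v = 0 -> v != 0 ->
  forall S : {set 'I_n}, (#|S| <= s)%N ->
    (s.+1)%:R * norm1 (restr S v) <= norm1 (restr (~: S) v).
End Defs.

From mathcomp Require Import all_boot all_order all_algebra.
From mathcomp Require Import ring lra.
Set Implicit Arguments. Unset Strict Implicit. Unset Printing Implicit Defensive.
Import Order.TTheory GRing.Theory Num.Theory.
Local Open Scope ring_scope.

(* Let S be the support of x, a = ||x||_1, c = ||x||_2, p = ||v_S||_1 and
   q = ||v_{~S}||_1.  Then ||x + v||_1 >= L := a + <sgn x, v> + q and
   ||x + v||_2^2 = c^2 + 2 <x, v> + ||v||_2^2, so it suffices to show
   a^2 ||x + v||_2^2 <= c^2 L^2.  The cross terms need
   2 a (a <x, v> - c^2 <sgn x, v>) <= a c^2 q, which follows coordinatewise from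
   |2 (a x_i - c^2 sgn x_i)| <= (|S| + 1) c^2 on S and from the null space
   property (|S| + 1) p <= q.  The quadratic term needs a^2 ||v||_2^2 <= a c^2 q,
   which holds once 2 a ||v||_2 <= c^2, as ||v||_2^2 <= ||v||_2 (p + q) and
   p <= q. *)

Lemma sgr_mulr_le_norm (R : realDomainType) (a b : R) : Num.sg a * b <= `|b|.
Proof.
apply: le_trans (ler_norm _) _; rewrite normrM normr_sg.
by case: (a != 0); rewrite ?mul1r ?mul0r.
Qed.

Lemma sgr_mulr_ge_normN (R : realDomainType) (a b : R) : - `|b| <= Num.sg a * b.
Proof. by rewrite lerNl -mulrN -normrN sgr_mulr_le_norm. Qed.

Section Norms.
Variables (R : rcfType) (n : nat).
Implicit Types (x v y : 'cV[R]_n) (S : {set 'I_n}).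

Definition supp y := [set i | y i 0 != 0].

Definition dotv x v := \sum_i x i 0 * v i 0.

(* [Num.sg 0 = 0], so only the support of [x] contributes. *)
Definition sg_dot x v := \sum_i Num.sg (x i 0) * v i 0.

Lemma norm2_ge0 y : 0 <= norm2 y.
Proof. exact: sqrtr_ge0. Qed.

Lemma sqr_norm2 y : norm2 y ^+ 2 = \sum_i y i 0 ^+ 2.
Proof. by rewrite sqr_sqrtr // sumr_ge0 // => i _; rewrite sqr_ge0. Qed.

Lemma abs_le_norm2 y i : `|y i 0| <= norm2 y.
Proof.
rewrite -ler_sqr ?nnegrE ?norm2_ge0 // real_normK ?num_real // sqr_norm2.
by rewrite (bigD1 i) //= lerDl sumr_ge0 // => j _; rewrite sqr_ge0.
Qed.

Lemma norm2_gt0 y : (0 < norm2 y) = (y != 0).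
Proof.
apply/idP/idP => [|/eqP y0].
  apply: contraTneq => ->; rewrite /norm2 big1 ?sqrtr0 ?ltxx // => i _.
  by rewrite mxE expr0n.
have [i yi0] : exists i, y i 0 != 0.
  apply/existsP; apply: contra_notT y0 => /existsPn yi0.
  by apply/matrixP => i j; rewrite ord1 mxE; apply/eqP/negPn.
by apply: lt_le_trans (abs_le_norm2 y i); rewrite normr_gt0.
Qed.

Lemma norm1_restr S y : norm1 (restr S y) = \sum_(i in S) `|y i 0|.
Proof.
rewrite /norm1 (bigID (mem S)) /= addrC big1 ?add0r => [|i /negbTE iS].
  by apply: eq_bigr => i iS; rewrite mxE iS.
by rewrite mxE iS normr0.
Qed.

Lemma norm1_restrC S y :
  norm1 y = norm1 (restr S y) + norm1 (restr (~: S) y).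
Proof.
rewrite !norm1_restr [norm1 y](bigID (mem S)) /=.
by congr (_ + _); apply: eq_bigl => i; rewrite in_setC.
Qed.

Lemma sqr_norm2_le_mul_norm1 y : norm2 y ^+ 2 <= norm2 y * norm1 y.
Proof.
rewrite sqr_norm2 /norm1 mulr_sumr; apply: ler_sum => i _.
rewrite -real_normK ?num_real // expr2.
exact: ler_wpM2r (abs_le_norm2 y i).
Qed.

Lemma norm1_gt0 x : x != 0 -> 0 < norm1 x.
Proof.
move=> x0; have c_gt0 : 0 < norm2 x by rewrite norm2_gt0.
apply: (lt_le_trans c_gt0).
by rewrite -(ler_pM2l c_gt0) -expr2 sqr_norm2_le_mul_norm1.
Qed.

Lemma sqr_norm2D x v :
  norm2 (x + v) ^+ 2 = norm2 x ^+ 2 + 2 * dotv x v + norm2 v ^+ 2.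
Proof.
rewrite !sqr_norm2 /dotv mulr_sumr -!big_split; apply: eq_bigr => i _.
by rewrite mxE /=; ring.
Qed.

Lemma norm1_mul_abs_le x i :
  2 * norm1 x * `|x i 0| <= (norm0 x).+1%:R * norm2 x ^+ 2.
Proof.
have xi_le : x i 0 ^+ 2 <= norm2 x ^+ 2.
  by rewrite -real_normK ?num_real // lerXn2r ?nnegrE ?norm2_ge0 ?abs_le_norm2.
have amgm j : 2 * (`|x j 0| * `|x i 0|) <=
              x j 0 ^+ 2 + (if j \in supp x then x i 0 ^+ 2 else 0).
  rewrite inE; case: eqP => [->|_] /=; first by rewrite normr0 mul0r mulr0 expr0n addr0.
  rewrite -[x j 0 ^+ 2]real_normK ?num_real // -[x i 0 ^+ 2]real_normK ?num_real //.
  have := sqr_ge0 (`|x j 0| - `|x i 0|); lra.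
rewrite -mulrA /norm1 mulr_suml mulr_sumr.
apply: le_trans (ler_sum _ (fun j _ => amgm j)) _.
rewrite big_split /= -big_mkcond sumr_const -sqr_norm2 -[_ *+ _]mulr_natl.
by rewrite -natr1 mulrDl mul1r addrC lerD2r ler_wpM2l.
Qed.

Lemma norm1_sgr_gap_le x i : x i 0 != 0 ->
  2 * `|norm1 x * x i 0 - norm2 x ^+ 2 * Num.sg (x i 0)|
  <= (norm0 x).+1%:R * norm2 x ^+ 2.
Proof.
move=> xi0; have k_gt0 : (0 < norm0 x)%N.
  by rewrite card_gt0; apply/set0Pn; exists i; rewrite inE.
have k2 : 2 * norm2 x ^+ 2 <= (norm0 x).+1%:R * norm2 x ^+ 2.
  by rewrite ler_wpM2r ?sqr_ge0 // ler_nat ltnS.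
have a_ge0 : 0 <= norm1 x * `|x i 0|.
  by rewrite mulr_ge0 // sumr_ge0.
have -> : norm1 x * x i 0 - norm2 x ^+ 2 * Num.sg (x i 0)
          = Num.sg (x i 0) * (norm1 x * `|x i 0| - norm2 x ^+ 2).
  by rewrite {1}[x i 0]numEsg; ring.
rewrite normrM normr_sg xi0 mul1r -[2]ger0_norm // -normrM ler_norml.
by have := norm1_mul_abs_le x i => h; apply/andP; split; nra.
Qed.

Lemma dotv_sg_dot_le x v :
  2 * (norm1 x * dotv x v - norm2 x ^+ 2 * sg_dot x v)
  <= (norm0 x).+1%:R * norm2 x ^+ 2 * norm1 (restr (supp x) v).
Proof.
rewrite norm1_restr /dotv /sg_dot !mulr_sumr -sumrB mulr_sumr [X in _ <= X]big_mkcond.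
apply: ler_sum => i _; rewrite inE; case: eqP => [->|/eqP xi0].
  by rewrite sgr0 !(mul0r, mulr0) subrr mulr0.
have -> : 2 * (norm1 x * (x i 0 * v i 0) - norm2 x ^+ 2 * (Num.sg (x i 0) * v i 0))
          = v i 0 * (2 * (norm1 x * x i 0 - norm2 x ^+ 2 * Num.sg (x i 0))) by ring.
apply: le_trans (ler_norm _) _; rewrite normrM mulrC normrM ger0_norm //.
by rewrite ler_wpM2r // norm1_sgr_gap_le.
Qed.

Lemma sg_dot_ge x v : - norm1 (restr (supp x) v) <= sg_dot x v.
Proof.
rewrite norm1_restr big_mkcond -sumrN; apply: ler_sum => i _.
rewrite inE; case: eqP => [->|_]; first by rewrite sgr0 mul0r oppr0.
exact: sgr_mulr_ge_normN.
Qed.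

Lemma norm1_addr_ge x v :
  norm1 x + sg_dot x v + norm1 (restr (~: supp x) v) <= norm1 (x + v).
Proof.
rewrite norm1_restr big_mkcond /norm1 /sg_dot -!big_split; apply: ler_sum => i _.
rewrite !mxE in_setC inE; case: eqP => [->|_] /=.
  by rewrite normr0 sgr0 mul0r !add0r.
by rewrite addr0 normrEsg -mulrDr sgr_mulr_le_norm.
Qed.

Lemma norm1_norm2D_sqr_le x v :
  (norm0 x).+1%:R * norm1 (restr (supp x) v) <= norm1 (restr (~: supp x) v) ->
  2 * norm1 x * norm2 v <= norm2 x ^+ 2 ->
  norm1 x ^+ 2 * norm2 (x + v) ^+ 2
  <= norm2 x ^+ 2 * (norm1 x + sg_dot x v + norm1 (restr (~: supp x) v)) ^+ 2.
Proof.
set a := norm1 x; set c2 := norm2 x ^+ 2; set K := (norm0 x).+1%:R.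
set p := norm1 (restr _ v); set q := norm1 (restr _ v); set u := sg_dot x v.
move=> Kpq nv_le; rewrite sqr_norm2D -/c2.
have a0 : 0 <= a by rewrite sumr_ge0.
have p0 : 0 <= p by rewrite sumr_ge0.
have c0 : 0 <= c2 by rewrite sqr_ge0.
have nv0 := norm2_ge0 v.
have pq : p <= q.
  apply: le_trans Kpq; rewrite ler_peMl // /K -natr1 lerDr //.
have hX : 2 * a ^+ 2 * dotv x v <= 2 * a * c2 * u + a * c2 * q.
  have h := ler_wpM2l a0 (dotv_sg_dot_le x v); rewrite -/a -/c2 -/K -/p -/u in h.
  have : a * (c2 * (K * p)) <= a * (c2 * q) by rewrite !ler_wpM2l.
  lra.
have hv : a ^+ 2 * norm2 v ^+ 2 <= a * c2 * q.
  have h := sqr_norm2_le_mul_norm1 v; rewrite (norm1_restrC (supp x)) -/p -/q in h.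
  have h1 : a ^+ 2 * norm2 v ^+ 2 <= a ^+ 2 * (norm2 v * (p + q)).
    by rewrite ler_wpM2l ?sqr_ge0.
  have h2 : a ^+ 2 * norm2 v * p <= a ^+ 2 * norm2 v * q.
    by rewrite ler_wpM2l ?mulr_ge0 ?sqr_ge0.
  have h3 : a * q * (2 * a * norm2 v) <= a * q * c2.
    by rewrite ler_wpM2l ?mulr_ge0 // (le_trans p0).
  lra.
have : 0 <= c2 * (u + q) ^+ 2 by rewrite mulr_ge0 ?sqr_ge0.
lra.
Qed.

Lemma norm_ratio_le_addr x v : x != 0 ->
  (norm0 x).+1%:R * norm1 (restr (supp x) v) <= norm1 (restr (~: supp x) v) ->
  2 * norm1 x * norm2 v <= norm2 x ^+ 2 ->
  norm1 x / norm2 x <= norm1 (x + v) / norm2 (x + v).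
Proof.
move=> x0 Kpq nv_le; have := norm1_norm2D_sqr_le Kpq nv_le.
set L := _ + _ + _ => sqr_le.
have a_gt0 := norm1_gt0 x0.
have L_ge : norm1 x <= L.
  have p_le : norm1 (restr (supp x) v) <= (norm0 x).+1%:R * norm1 (restr (supp x) v).
    by rewrite ler_peMl ?sumr_ge0 // ler1n.
  have := sg_dot_ge x v; rewrite /L; lra.
have N1_ge := norm1_addr_ge x v; rewrite -/L in N1_ge.
have xv0 : x + v != 0.
  apply: contra_ltN (lt_le_trans a_gt0 (le_trans L_ge N1_ge)) => /eqP ->.
  by rewrite /norm1 big1 // => i _; rewrite mxE normr0.
rewrite ler_pdivrMr ?norm2_gt0 // mulrAC ler_pdivlMr ?norm2_gt0 //.
rewrite -ler_sqr ?nnegrE ?mulr_ge0 ?norm2_ge0 ?sumr_ge0 // !exprMn.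
apply: le_trans sqr_le _; rewrite [X in _ <= X]mulrC ler_wpM2l ?sqr_ge0 //.
by rewrite ler_sqr ?nnegrE ?sumr_ge0 // (le_trans (ltW a_gt0)).
Qed.

End Norms.

Theorem theorem2p1 (R : rcfType) (m n s : nat) (A : 'M[R]_(m, n))
  (b : 'cV[R]_m) (x : 'cV[R]_n) :
  sNSP A s -> b != 0 -> (norm0 x <= s)%N -> A *m x = b ->
  exists t : R, 0 < t /\
    forall v : 'cV[R]_n, A *m v = 0 -> 0 < norm2 v -> norm2 v <= t ->
      norm1 x / norm2 x <= norm1 (x + v) / norm2 (x + v).
Proof.
move=> nsp b0 x_sparse Ax.
have x0 : x != 0 by apply: contraNneq b0 => x0; rewrite -Ax x0 mulmx0.
have den_gt0 : 0 < 2 * norm1 x by rewrite mulr_gt0 ?norm1_gt0.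
exists (norm2 x ^+ 2 / (2 * norm1 x)); split.
  by rewrite divr_gt0 ?exprn_gt0 ?norm2_gt0.
move=> v Av nv_gt0 nv_le; apply: norm_ratio_le_addr => //.
  apply: le_trans (nsp v Av _ (supp x) x_sparse); last by rewrite -norm2_gt0.
  by rewrite ler_wpM2r ?sumr_ge0 // ler_nat.
by rewrite mulrC -ler_pdivlMr.
Qed.
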